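(* Let $(\mathcal{F},\langle\cdot,\cdot\rangle_\Xi)$ be a real inner product space (e.g. a finite-dimensional space of functions on $\Xi$) with norm $\|\cdot\|_\Xi$. Let $a,f\in\mathcal{F}$ and $\delta\ge 0$ with $\|f-a\|_\Xi\le\delta$, and let $\mathcal{S}(a,\delta)=\{u\in\mathcal{F}:\|u-a\|_\Xi\le\delta\}$. Let $g\in\mathcal{F}$ and let $h$ be the metric projection of $g$ onto $\mathcal{S}(a,\delta)$, i.e. $h\in\arg\min_{u\in\mathcal{S}(a,\delta)}\|u-g\|_\Xi$. Then $\|f-h\|_\Xi\le\|f-g\|_\Xi$. Moreover, if $g\notin\mathcal{S}(a,\delta)$, then $\|f-h\|_\Xi<\|f-g\|_\Xi$ and, with $\Delta:=\|g-h\|_\Xi$, $$\Delta\sqrt{\frac{\Delta}{\delta+\Delta}}\;\le\;\|f-g\|_\Xi-\|f-h\|_\Xi\;\le\;\Delta.$$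
   Context: Here $f$ is the (unknown) target function, $a$ an anchor function with certified tolerance $\delta$, and $g$ an arbitrary approximation of $f$. *)

From mathcomp Require Import all_boot all_order all_algebra.
From mathcomp Require Import reals.
Set Implicit Arguments. Unset Strict Implicit. Unset Printing Implicit Defensive.
Import Order.TTheory GRing.Theory Num.Theory.
Local Open Scope ring_scope.

Definition is_inner_product (R : realType) (V : lmodType R)
  (ip : V -> V -> R) : Prop :=
  [/\ (forall u v, ip u v = ip v u),
      (forall a u v w, ip (a *: u + v) w = a * ip u w + ip v w),
      (forall u, 0 <= ip u u) &
      (forall u, ip u u = 0 -> u = 0)].

Definition ipnorm (R : realType) (V : lmodType R) (ip : V -> V -> R) (u : V) : R :=
  Num.sqrt (ip u u).

Definition cball_ip (R : realType) (V : lmodType R) (ip : V -> V -> R)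
  (a : V) (delta : R) : V -> Prop :=
  fun u => ipnorm ip (u - a) <= delta.

Definition is_metric_projection (R : realType) (V : lmodType R) (ip : V -> V -> R)
  (S : V -> Prop) (g h : V) : Prop :=
  S h /\ forall u, S u -> ipnorm ip (h - g) <= ipnorm ip (u - g).

From mathcomp Require Import all_boot all_order all_algebra.
From mathcomp Require Import reals.
From mathcomp Require Import ring lra.
Import Order.TTheory GRing.Theory Num.Theory.
Set Implicit Arguments.
Unset Strict Implicit.
Unset Printing Implicit Defensive.
Local Open Scope ring_scope.

(* The projection h onto the convex ball satisfies the obtuse-angle inequality
   <g - h, u - h> <= 0 on the ball; at u = f it gives
   ||f - g||^2 = ||f - h||^2 + Delta^2 + 2c with c = <h - f, g - h> >= 0, hence the
   first two claims; the upper bound is the triangle inequality.  For g outside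
   the ball, testing the obtuse-angle inequality at u = a + (delta/Delta)(g - h)
   forces equality in Cauchy-Schwarz: h lies on the sphere and g - h points
   along h - a.  Then 2 delta c = 2 Delta <h - f, h - a> >= Delta ||f - h||^2,
   and the lower bound is a scalar inequality in these quantities. *)

Section InnerProduct.
Variables (R : realType) (V : lmodType R) (ip : V -> V -> R).
Hypothesis Hip : is_inner_product ip.
Local Notation nrm := (ipnorm ip).

Lemma ipC u v : ip u v = ip v u.
Proof. by case: Hip. Qed.

Lemma ipDl u v w : ip (u + v) w = ip u w + ip v w.
Proof. by case: Hip => _ HL _ _; have := HL 1 u v w; rewrite scale1r mul1r. Qed.

Lemma ip0l w : ip 0 w = 0.
Proof. by apply: (addrI (ip 0 w)); rewrite -ipDl !addr0. Qed.

Lemma ipZl k u w : ip (k *: u) w = k * ip u w.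
Proof. by case: Hip => _ HL _ _; have := HL k u 0 w; rewrite !addr0 ip0l addr0. Qed.

Lemma ipNl u w : ip (- u) w = - ip u w.
Proof. by rewrite -scaleN1r ipZl mulN1r. Qed.

Lemma ipDr u v w : ip w (u + v) = ip w u + ip w v.
Proof. by rewrite !(ipC w) ipDl. Qed.

Lemma ipZr k u w : ip w (k *: u) = k * ip w u.
Proof. by rewrite !(ipC w) ipZl. Qed.

Lemma ipNr u w : ip w (- u) = - ip w u.
Proof. by rewrite !(ipC w) ipNl. Qed.

Lemma ip_sqrDZ x y k :
  ip (x + k *: y) (x + k *: y) = ip x x + 2 * k * ip x y + k ^+ 2 * ip y y.
Proof. by rewrite !(ipDl, ipDr, ipZl, ipZr) (ipC y x); ring. Qed.

Lemma ip_sqrB x y : ip (x - y) (x - y) = ip x x - 2 * ip x y + ip y y.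
Proof. by rewrite -scaleN1r ip_sqrDZ; ring. Qed.

Lemma ipnorm_ge0 u : 0 <= nrm u.
Proof. exact: sqrtr_ge0. Qed.

Lemma sqr_ipnorm u : nrm u ^+ 2 = ip u u.
Proof. by case: Hip => _ _ Hge0 _; rewrite sqr_sqrtr. Qed.

Lemma ipnorm_eq0 u : nrm u = 0 -> u = 0.
Proof.
case: Hip => _ _ _ Hdef /(congr1 (fun r => r ^+ 2)).
by rewrite sqr_ipnorm expr0n; apply: Hdef.
Qed.

Lemma ipnorm_le u r : 0 <= r -> (nrm u <= r) = (ip u u <= r ^+ 2).
Proof. by move=> r0; rewrite -sqr_ipnorm ler_sqr // nnegrE ipnorm_ge0. Qed.

Lemma ipnorm_le_ip u v : (nrm u <= nrm v) = (ip u u <= ip v v).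
Proof. by rewrite -!sqr_ipnorm ler_sqr // nnegrE ipnorm_ge0. Qed.

Lemma ipnormZ k u : nrm (k *: u) = `|k| * nrm u.
Proof.
rewrite /ipnorm ipZl ipZr mulrA -expr2 sqrtrM ?sqr_ge0 //.
by rewrite sqrtr_sqr.
Qed.

Lemma ipnormB u v : nrm (u - v) = nrm (v - u).
Proof. by rewrite -opprB -[- _]scaleN1r ipnormZ normrN1 mul1r. Qed.

Lemma ipnorm_sqrB x y : nrm (x - y) ^+ 2 = nrm x ^+ 2 + nrm y ^+ 2 - 2 * ip x y.
Proof. by rewrite !sqr_ipnorm ip_sqrB; ring. Qed.

Lemma ip_cauchy_schwarz x y : ip x y <= nrm x * nrm y.
Proof.
have nrm0 : nrm 0 = 0 by rewrite /ipnorm ip0l sqrtr0.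
have [/eqP|nxy0] := eqVneq (nrm x * nrm y) 0.
  rewrite mulf_eq0 => /orP[/eqP/ipnorm_eq0 -> | /eqP/ipnorm_eq0 ->].
    by rewrite ip0l nrm0 mul0r.
  by rewrite ipC ip0l nrm0 mulr0.
have nxy_gt0 : 0 < nrm x * nrm y by rewrite lt_def nxy0 mulr_ge0 ?ipnorm_ge0.
have := sqr_ge0 (nrm (nrm y *: x - nrm x *: y)).
rewrite sqr_ipnorm ip_sqrB !(ipZl, ipZr) -!sqr_ipnorm => H.
nra.
Qed.

Lemma ipnormD u v : nrm (u + v) <= nrm u + nrm v.
Proof.
rewrite ipnorm_le ?addr_ge0 ?ipnorm_ge0 // -[v]scale1r ip_sqrDZ scale1r.
have := ip_cauchy_schwarz u v; rewrite -!sqr_ipnorm; nra.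
Qed.

End InnerProduct.

Section MetricProjection.
Variables (R : realType) (V : lmodType R) (ip : V -> V -> R).
Hypothesis Hip : is_inner_product ip.
Local Notation nrm := (ipnorm ip).

Definition convex_set (S : V -> Prop) : Prop :=
  forall u v t, S u -> S v -> 0 <= t <= 1 -> S (u + t *: (v - u)).

Lemma cball_convex a delta : convex_set (cball_ip ip a delta).
Proof.
move=> u v t hu hv /andP[t0 t1]; rewrite /cball_ip.
have -> : u + t *: (v - u) - a = (1 - t) *: (u - a) + t *: (v - a).
  have -> : v - u = (v - a) - (u - a) by rewrite opprB addrA subrK.
  by rewrite scalerBr scalerBl scale1r addrAC addrA [in RHS]addrAC.
apply: (le_trans (ipnormD Hip _ _)).
rewrite !(ipnormZ Hip) !ger0_norm ?subr_ge0 //; move: hu hv; rewrite /cball_ip; nra.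
Qed.

Variables (S : V -> Prop) (g h : V).
Hypotheses (S_convex : convex_set S) (Hh : is_metric_projection ip S g h).

(* At t = c / (c + d) the point h + t (u - h) would be strictly closer to g. *)
Lemma metric_projection_obtuse u : S u -> ip (g - h) (u - h) <= 0.
Proof.
move=> Su; case: Hh => Sh hmin; rewrite leNgt; apply/negP => c_gt0.
set c := ip (g - h) (u - h) in c_gt0; set d := ip (u - h) (u - h).
have d_ge0 : 0 <= d by rewrite /d -sqr_ipnorm ?sqr_ge0.
set t := c / (c + d).
have cd_gt0 : 0 < c + d by lra.
have tcd : t * (c + d) = c by rewrite /t mulfVK // gt_eqF.
have t_gt0 : 0 < t by rewrite divr_gt0.
have t_le1 : t <= 1 by rewrite ler_pdivrMr // mul1r; lra.
have ht : 0 <= t <= 1 by rewrite ltW.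
have := hmin _ (S_convex Sh Su ht).
rewrite ipnorm_le_ip //.
have -> : h + t *: (u - h) - g = (h - g) + t *: (u - h) by rewrite addrAC.
rewrite ip_sqrDZ // -/d.
have -> : ip (h - g) (u - h) = - c by rewrite -ipNl // opprB.
nra.
Qed.

End MetricProjection.

Section CballProjection.
Variables (R : realType) (V : lmodType R) (ip : V -> V -> R).
Hypothesis Hip : is_inner_product ip.
Local Notation nrm := (ipnorm ip).
Variables (a g h : V) (delta : R).
Hypotheses (delta_ge0 : 0 <= delta)
  (Hh : is_metric_projection ip (cball_ip ip a delta) g h)
  (g_out : ~ cball_ip ip a delta g).

Lemma cball_projection_dist_gt0 : 0 < nrm (g - h).
Proof.
rewrite lt_def ipnorm_ge0 andbT; apply/eqP => /(ipnorm_eq0 Hip)/subr0_eq gh.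
by apply: g_out; rewrite gh; case: Hh.
Qed.

(* Test the obtuse-angle inequality at the point of the sphere in direction
   g - h; Cauchy-Schwarz then holds with equality. *)
Lemma cball_projection_on_sphere :
  nrm (h - a) = delta /\ ip (g - h) (h - a) = delta * nrm (g - h).
Proof.
have D_gt0 := cball_projection_dist_gt0; set D := nrm (g - h) in D_gt0 *.
have hm : nrm (h - a) <= delta by case: Hh.
set k := delta / D; have kD : k * D = delta by rewrite /k mulfVK // gt_eqF.
have u0_in : cball_ip ip a delta (a + k *: (g - h)).
  rewrite /cball_ip addrC addKr (ipnormZ Hip) ger0_norm; first by rewrite kD.
  by rewrite divr_ge0 // ltW.
have := metric_projection_obtuse Hip (@cball_convex _ _ _ Hip a delta) Hh u0_in.
have -> : a + k *: (g - h) - h = k *: (g - h) - (h - a) by rewrite addrAC opprB addrC.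
move=> hP; rewrite (ipDr Hip) (ipZr Hip) (ipNr Hip) -sqr_ipnorm // -/D in hP.
have P_ge : delta * D <= ip (g - h) (h - a) by rewrite -kD -mulrA -expr2; lra.
have cs := ip_cauchy_schwarz Hip (g - h) (h - a); rewrite -/D in cs.
have m_eq : nrm (h - a) = delta.
  apply: le_anti; rewrite hm -(ler_pM2l D_gt0) mulrC.
  exact: le_trans P_ge cs.
split=> //; apply: le_anti; rewrite P_ge andbT.
by rewrite m_eq mulrC in cs.
Qed.

Lemma cball_projection_aligned : delta *: (g - h) = nrm (g - h) *: (h - a).
Proof.
have [m_eq P_eq] := cball_projection_on_sphere.
apply/eqP; rewrite -subr_eq0; apply/eqP/(ipnorm_eq0 Hip).
apply/eqP; rewrite -sqrf_eq0 ipnorm_sqrB // !(ipnormZ Hip) (ipZl Hip) (ipZr Hip).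
by rewrite P_eq m_eq !ger0_norm ?ipnorm_ge0 //; apply/eqP; ring.
Qed.

(* delta c = Delta <h - f, h - a>, and polarization bounds the latter using
   ||h - a|| = delta >= ||f - a||. *)
Lemma cball_projection_gap f : nrm (f - a) <= delta ->
  nrm (g - h) * nrm (f - h) ^+ 2 <= 2 * delta * ip (h - f) (g - h).
Proof.
move=> hf; have [m_eq _] := cball_projection_on_sphere.
have D_gt0 := cball_projection_dist_gt0.
have -> : 2 * delta * ip (h - f) (g - h) = nrm (g - h) * (2 * ip (h - f) (h - a)).
  by rewrite -mulrA -(ipZr Hip delta) cball_projection_aligned (ipZr Hip); ring.
have := ipnorm_sqrB Hip (h - f) (h - a).
have -> : h - f - (h - a) = a - f by rewrite opprB addrC addrA subrK.
rewrite (ipnormB Hip a) (ipnormB Hip h f) m_eq => pol.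
have F_le : nrm (f - a) ^+ 2 <= delta ^+ 2 by rewrite ler_sqr ?nnegrE ?ipnorm_ge0.
by rewrite ler_pM2l //; lra.
Qed.

End CballProjection.

Lemma sqrt_gap_lower (R : realType) (delta D A B c : R) :
  0 <= delta -> 0 < D -> 0 <= B -> 0 <= A -> 0 <= c ->
  A ^+ 2 = B ^+ 2 + D ^+ 2 + 2 * c -> D * B ^+ 2 <= 2 * delta * c ->
  D * Num.sqrt (D / (delta + D)) <= A - B.
Proof.
move=> delta_ge0 D_gt0 B_ge0 A_ge0 c_ge0 hA hc.
set s := Num.sqrt _; have s_ge0 : 0 <= s := sqrtr_ge0 _.
have dD_gt0 : 0 < delta + D by rewrite ltr_wpDl.
have hs : s ^+ 2 * (delta + D) = D.
  by rewrite sqr_sqrtr ?divr_ge0 ?ltW // mulfVK // gt_eqF.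
rewrite lerBrDr -ler_sqr ?nnegrE ?addr_ge0 ?mulr_ge0 ?(ltW D_gt0) //.
have [delta0|delta_neq0] := eqVneq delta 0.
  have B0 : B = 0.
    move: hc; rewrite delta0 mulr0 mul0r pmulr_rle0 // => B2_le0.
    by apply/eqP; rewrite -sqrf_eq0 eq_le B2_le0 sqr_ge0.
  have s1 : s = 1 by rewrite /s delta0 add0r divff ?sqrtr1 // gt_eqF.
  by rewrite hA B0 s1; lra.
have delta_gt0 : 0 < delta by rewrite lt_def delta_neq0.
have key : delta * (A ^+ 2 - (D * s + B) ^+ 2)
           = D * (delta * s - B) ^+ 2 + (2 * delta * c - D * B ^+ 2).
  apply/eqP; rewrite -subr_eq0; apply/eqP.
  transitivity (delta * D * (D - s ^+ 2 * (delta + D))); first by rewrite hA; ring.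
  by rewrite hs subrr mulr0.
rewrite -subr_ge0 -(pmulr_rge0 _ delta_gt0) key.
by rewrite addr_ge0 ?subr_ge0 // mulr_ge0 ?sqr_ge0 ?ltW.
Qed.

Theorem mainTheorem3 (R : realType) (V : lmodType R) (ip : V -> V -> R)
  (Hip : is_inner_product ip) (a f g h : V) (delta : R)
  (Hdelta : 0 <= delta) (Hf : ipnorm ip (f - a) <= delta)
  (Hh : is_metric_projection ip (cball_ip ip a delta) g h) :
  ipnorm ip (f - h) <= ipnorm ip (f - g) /\
  (~ cball_ip ip a delta g ->
     let Delta := ipnorm ip (g - h) in
     ipnorm ip (f - h) < ipnorm ip (f - g) /\
     Delta * Num.sqrt (Delta / (delta + Delta))
       <= ipnorm ip (f - g) - ipnorm ip (f - h) /\
     ipnorm ip (f - g) - ipnorm ip (f - h) <= Delta).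
Proof.
set A := ipnorm ip (f - g); set B := ipnorm ip (f - h); set D := ipnorm ip (g - h).
have [A_ge0 B_ge0] := (ipnorm_ge0 ip (f - g), ipnorm_ge0 ip (f - h)).
set c := ip (h - f) (g - h).
have c_ge0 : 0 <= c.
  rewrite /c -[h - f]opprB (ipNl Hip) oppr_ge0 (ipC Hip).
  have f_in : cball_ip ip a delta f := Hf.
  exact (metric_projection_obtuse Hip (@cball_convex _ _ _ Hip a delta) Hh f_in).
have hA : A ^+ 2 = B ^+ 2 + D ^+ 2 + 2 * c.
  rewrite /A; have -> : f - g = (f - h) - (g - h) by rewrite opprB addrA subrK.
  by rewrite (ipnorm_sqrB Hip) -/B -/D /c -[h - f]opprB (ipNl Hip); ring.
have D2_ge0 := sqr_ge0 D.
split=> [|g_out /=]; first by rewrite -ler_sqr ?nnegrE // hA; lra.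
have D_gt0 : 0 < D := cball_projection_dist_gt0 Hip Hh g_out.
split; first by rewrite -ltr_sqr ?nnegrE // hA; nra.
split.
  exact: sqrt_gap_lower Hdelta D_gt0 B_ge0 A_ge0 c_ge0 hA
    (cball_projection_gap Hip Hdelta Hh g_out Hf).
rewrite /A; have -> : f - g = (f - h) + (h - g) by rewrite addrA subrK.
by rewrite lerBlDl /D -(ipnormB Hip h g); apply: ipnormD.
Qed.
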